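(* Let $G=(V,E)$ be a network and consider an $\mathbb{F}_q$-valued rate-$\omega$ LNEC code on $G$, as in the context. For a sink node $t\in T$ with $\dim\Phi(t)=\omega$, the code corrects at $t$ any error vector in the set $$\mathcal{Z}\Big(\mathcal{E}_t\big(\lfloor (d_{\min}^{(t)}-1)/2\rfloor\big)\Big)=\Big\{z\in\mathbb{F}_q^{|E|}: z\text{ matches some }\xi\in\mathcal{E}_t\big(\lfloor (d_{\min}^{(t)}-1)/2\rfloor\big)\Big\}.$$
   Context: Network: $G=(V,E)$ is a finite directed acyclic graph (parallel edges allowed) with a single source node $s$ and a set of sink nodes $T\subseteq V\setminus\{s\}$; $s$ has no incoming edges and sink nodes have no outgoing edges. For an edge $e$, $\mathrm{tail}(e)$, $\mathrm{head}(e)$ are its tail and head; $\mathrm{In}(v)$, $\mathrm{Out}(v)$ are the incoming/outgoing edge sets of node $v$. A directed path is a sequence of edges $(e_1,\dots,e_m)$, $m\ge1$, with $\mathrm{tail}(e_{k+1})=\mathrm{head}(e_k)$. LNEC code: with rate $\omega\ge1$ and finite field $\mathbb{F}_q$, introduce imaginary source edges $d_1',\dots,d_\omega'$ ending at $s$ with $\mathrm{In}(s)=\{d_1',\dots,d_\omega'\}$, and for each $e\in E$ an imaginary error edge $e'$ with head $\mathrm{tail}(e)$; $E'=\{e':e\in E\}$ (for non-source nodes, $\mathrm{In}(v)$ contains only edges of $E$). The code is given by local encoding coefficients $k_{d,e}\in\mathbb{F}_q$ for $e\in E$, $d\in\mathrm{In}(\mathrm{tail}(e))$. Extended global encoding kernels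 are vectors in $\mathbb{F}_q^{\omega+|E|}$ indexed by $\{d_i'\}\cup E'$: $\tilde f_{d_i'}=1_{d_i'}$, $\tilde f_{e'}=1_{e'}$ (standard basis vectors), and recursively in topological order $\tilde f_e=\sum_{d\in\mathrm{In}(\mathrm{tail}(e))}k_{d,e}\tilde f_d+1_{e'}$. For sink $t$, $\mathrm{row}_t(d')=(\tilde f_{\hat e}(d'):\hat e\in\mathrm{In}(t))$. Message space $\Phi(t)=\langle\mathrm{row}_t(d_i'):1\le i\le\omega\rangle$; error space $\Delta(t,\xi)=\langle\mathrm{row}_t(e'):e\in\xi\rangle$ for $\xi\subseteq E$. Minimum distance at $t$: $d_{\min}^{(t)}=\min\{|\xi|:\xi\subseteq E,\ \Phi(t)\cap\Delta(t,\xi)\neq\{0\}\}$. Error correction: an error vector $z=(z_e:e\in E)\in\mathbb{F}_q^{|E|}$ matches $\xi\subseteq E$ if $z_e=0$ for all $e\notin\xi$. For source message $x\in\mathbb{F}_q^\omega$ and error vector $z$, the received vector at $t$ is $\tilde y_t(x,z)=(x\ z)\cdot\tilde F_t$, $\tilde F_t=[\tilde f_e:e\in\mathrm{In}(t)]$. For a set $\mathcal{Z}$ of error vectors, the code corrects at $t$ any error vector in $\mathcal{Z}$ if for all $x,x'\in\mathbb{F}_q^\omega$ and $z,z'\in\mathcal{Z}$, $\tilde y_t(x,z)=\tilde y_t(x',z')$ implies $x=x'$. Graph notions: for $\xi\subseteq E$ and a node $u$, $A\subseteq E$ is a cut separating $u$ from $\xi$ if every directed path in $G$ whose first edge lies in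 $\xi$ and whose last edge has head $u$ contains an edge of $A$; $\mathrm{mincut}(\xi,u)$ is the minimum size of such a cut. $\mathcal{E}_t(r)=\{\xi\subseteq E:\mathrm{mincut}(\xi,t)\le r\}$. *)

From HB Require Import structures.
From mathcomp Require Import all_boot all_order all_algebra.
From mathcomp Require Import boolp.
Set Implicit Arguments. Unset Strict Implicit. Unset Printing Implicit Defensive.
Import Order.TTheory GRing.Theory Num.Theory.

Section Network.
Variables (V E : finType) (tl hd : E -> V).

(* directed path (e_1,...,e_m), m >= 1, given as e_1 :: rest *)
Definition dpath (e1 : E) (rest : seq E) : bool :=
  path (fun d e => hd d == tl e) e1 rest.

Definition acyclic : Prop :=
  forall e1 rest, dpath e1 rest -> hd (last e1 rest) != tl e1.

Definition is_cut (xi : {set E}) (u : V) (A : {set E}) : Prop :=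
  forall e1 rest, dpath e1 rest -> e1 \in xi -> hd (last e1 rest) = u ->
    exists2 e, e \in e1 :: rest & e \in A.

Definition mincut (xi : {set E}) (u : V) : nat :=
  \big[minn/#|E|]_(A : {set E} | `[< is_cut xi u A >]) #|A|.

Definition Eset (t : V) (r : nat) : {set E} -> Prop :=
  fun xi => mincut xi t <= r.

End Network.

Local Open Scope ring_scope.

Section LNEC.
Variables (V E : finType) (tl hd : E -> V) (s : V) (F : fieldType) (w : nat).

(* Extended global encoding kernels: fk e is the vector f~_e, indexed by
   'I_w + E  (inl i = imaginary source edge d_i', inr e = error edge e').
   They are characterised by the defining recursion (unique for a DAG):
   f~_e = sum_{d in In(tail e)} k_{d,e} f~_d + 1_{e'}, where In(s) consists
   of the imaginary source edges (coefficients kS i e) and for other nodes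
   of the real edges with head tail(e) (coefficients k d e). *)
Definition is_ext_kernel (kS : 'I_w -> E -> F) (k : E -> E -> F)
    (fk : E -> ('I_w + E)%type -> F) : Prop :=
  forall e c,
    fk e c = (if tl e == s then \sum_(i < w) kS i e * (c == inl i)%:R else 0)
             + \sum_(d | hd d == tl e) k d e * fk d c + (c == inr e)%:R.

(* row_t(c) : zero-padded to all of E, coordinate e nonzero only for e in In(t).
   Columns are indexed by 'I_#|E| via enum_val. *)
Definition rowt (fk : E -> ('I_w + E)%type -> F) (t : V) (c : ('I_w + E)%type)
  : 'rV[F]_#|E| :=
  \row_(j < #|E|) (if hd (enum_val j) == t then fk (enum_val j) c else 0).

(* Phi(t): row space of the matrix with rows row_t(d_i') *)
Definition PhiM fk t : 'M[F]_(w, #|E|) :=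
  \matrix_(i < w, j < #|E|) rowt fk t (inl i) 0 j.

(* Delta(t,xi): row space of the matrix with rows row_t(e'), e in xi *)
Definition DeltaM fk t (xi : {set E}) : 'M[F]_(#|E|, #|E|) :=
  \matrix_(i < #|E|, j < #|E|)
     (if enum_val i \in xi then rowt fk t (inr (enum_val i)) 0 j else 0).

(* d_min^(t): min |xi| with Phi(t) :&: Delta(t,xi) <> {0}
   (default #|E|.+1 if no such xi exists, which cannot happen when
   dim Phi(t) = w >= 1). *)
Definition dmin fk t : nat :=
  \big[minn/#|E|.+1]_(xi : {set E} | (PhiM fk t :&: DeltaM fk t xi != 0)%MS)
     #|xi|.

(* received vector at t, coordinate e (meaningful for e in In(t)) *)
Definition received fk (x : {ffun 'I_w -> F}) (z : {ffun E -> F}) (e : E) : F :=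
  \sum_(i < w) x i * fk e (inl i) + \sum_(d : E) z d * fk e (inr d).

Definition matches (z : {ffun E -> F}) (xi : {set E}) : Prop :=
  forall e, e \notin xi -> z e = 0.

Definition Zset (X : {set E} -> Prop) (z : {ffun E -> F}) : Prop :=
  exists2 xi, X xi & matches z xi.

Definition corrects fk (t : V) (Z : {ffun E -> F} -> Prop) : Prop :=
  forall x x' z z', Z z -> Z z' ->
    (forall e, hd e == t -> received fk x z e = received fk x' z' e) -> x = x'.

End LNEC.

(** A received word at t is the codeword of x plus the contribution of the
    error z.  Since the network is acyclic, the local recursion defining the
    kernels has unique solutions, and linearity lets us reroute an error
    matching xi into an error matching any cut A separating t from xi,
    without changing what t receives.  Two errors from the family thus give,
    at t, a difference of codewords lying in Delta(t, A :|: A') with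
    |A :|: A'| <= 2 floor((dmin - 1)/2) < dmin; by the definition of dmin
    this difference vanishes, and dim Phi(t) = omega makes the encoding of
    messages injective. *)

From HB Require Import structures.
From mathcomp Require Import all_boot all_order all_algebra boolp zify.
Set Implicit Arguments. Unset Strict Implicit. Unset Printing Implicit Defensive.
Import Order.TTheory GRing.Theory Num.Theory.
Local Open Scope ring_scope.

Lemma exists_neq_of_sum_neq (R : nmodType) (I : finType) (P : pred I) (f g : I -> R) :
  \sum_(i | P i) f i != \sum_(i | P i) g i -> exists2 i, P i & f i != g i.
Proof.
have [/existsP[i /andP[Pi neq_i]] _|/existsPn same] :=
  boolP [exists i, P i && (f i != g i)]; first by exists i.
suff -> : \sum_(i | P i) f i = \sum_(i | P i) g i by rewrite eqxx.
by apply: eq_bigr => i Pi; move/(_ i): same; rewrite Pi negbK => /eqP.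
Qed.

Section DagRecursion.
Variables (V E : finType) (tl hd : E -> V).
Hypothesis dagG : acyclic tl hd.

Lemma dpath_uniq e1 rest : dpath tl hd e1 rest -> uniq (e1 :: rest).
Proof.
elim: rest e1 => [//|e2 rest IH] e1 p.
have /= /andP[_ p2] := p; rewrite -/(uniq (e2 :: rest)) IH // andbT.
apply/negP => e1_in; move: p; case/splitPr: e1_in => p1 p2'.
rewrite /dpath cat_path => /and3P[p1P /eqP cyc _].
by move: (dagG p1P); rewrite cyc eqxx.
Qed.

Lemma no_backward_chain (Q : E -> Prop) :
  (forall e, Q e -> exists2 d, hd d == tl e & Q d) -> forall e, ~ Q e.
Proof.
move=> Qback e Qe.
have long_path n : exists e1 rest,
    [/\ size rest = n, Q e1 & dpath tl hd e1 rest].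
  elim: n => [|n [e1 [rest [<- Qe1 p]]]]; first by exists e, [::].
  have [d hd_d Qd] := Qback _ Qe1.
  by exists d, (e1 :: rest); rewrite /dpath /= hd_d.
have [e1 [rest [size_rest _ /dpath_uniq/card_uniqP card_path]]] := long_path #|E|.
by have := max_card (mem (e1 :: rest)); rewrite card_path /= size_rest ltnn.
Qed.

Definition dag_rec (R : pzRingType) (c : E -> E -> R) (z g : E -> R) : Prop :=
  forall e, g e = \sum_(d | hd d == tl e) c d e * g d + z e.

Lemma dag_rec_unique (R : pzRingType) (c : E -> E -> R) z g1 g2 :
  dag_rec c z g1 -> dag_rec c z g2 -> g1 =1 g2.
Proof.
move=> rec1 rec2 e; apply: contrapT; move: e; apply: no_backward_chain => e.
rewrite rec1 rec2 => /eqP; rewrite (inj_eq (addIr _)).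
move/exists_neq_of_sum_neq => [d hd_d neq_d]; exists d => // eq_d.
by rewrite eq_d eqxx in neq_d.
Qed.

Lemma dag_rec_exists (R : finPzRingType) (c : E -> E -> R) (z : E -> R) :
  exists g : {ffun E -> R}, dag_rec c z g.
Proof.
pose L (g : {ffun E -> R}) := [ffun e => g e - \sum_(d | hd d == tl e) c d e * g d].
have L_rec g : dag_rec c (L g) g by move=> e; rewrite ffunE addrC subrK.
have /injF_bij[L' _ LL'] : injective L.
  move=> g1 g2 eqL; apply/ffunP => e.
  by apply: (dag_rec_unique (L_rec g1)); rewrite eqL.
exists (L' [ffun e => z e]) => e.
by rewrite [LHS]L_rec LL' ffunE.
Qed.

Definition avoiding_path_from (src : pred E) (A : {set E}) (e : E) : Prop :=
  exists e1 rest, [/\ dpath tl hd e1 rest, src e1, last e1 rest = e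
                    & all [predC A] (e1 :: rest)].

Lemma dag_rec_support_path (R : pzRingType) (c : E -> E -> R) z g (A : {set E}) e :
  dag_rec c z g -> (forall d e, d \in A -> c d e = 0) ->
  e \notin A -> g e != 0 -> avoiding_path_from (fun d => z d != 0) A e.
Proof.
move=> recg cA eA ge; apply: contrapT => no_path.
pose Q e := [/\ e \notin A, g e != 0 & ~ avoiding_path_from (fun d => z d != 0) A e].
suff /(_ e) : forall e, ~ Q e by apply.
apply: no_backward_chain => {}e [{}eA {}ge {}no_path].
have ze : z e = 0.
  by apply: contrapT => /eqP ze; apply: no_path; exists e, [::]; rewrite /= eA.
have : \sum_(d | hd d == tl e) c d e * g d != \sum_(d | hd d == tl e) 0.
  by apply: contra ge => /eqP sum0; rewrite recg ze addr0 sum0 big1_eq.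
move/exists_neq_of_sum_neq => [d hd_d cg_d]; exists d => //.
have dA : d \notin A by apply: contra cg_d => /cA ->; rewrite mul0r.
split=> //; first by apply: contra cg_d => /eqP ->; rewrite mulr0.
move=> [e1 [rest [p ze1 last_d allA]]]; apply: no_path; exists e1, (rcons rest e).
rewrite /dpath rcons_path last_rcons -rcons_cons all_rcons /= eA.
by rewrite -/(dpath tl hd e1 rest) p last_d hd_d.
Qed.

End DagRecursion.

Definition error_response (E : finType) (I : Type) (F : pzRingType)
    (fk : E -> (I + E)%type -> F) (z : E -> F) (e : E) : F :=
  \sum_d z d * fk e (inr d).

Section ErrorResponse.
Variables (V E : finType) (tl hd : E -> V) (s : V) (F : fieldType) (w : nat).
Variables (kS : 'I_w -> E -> F) (k : E -> E -> F) (fk : E -> ('I_w + E)%type -> F).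
Hypothesis fkP : is_ext_kernel tl hd s kS k fk.

Lemma error_kernel_rec d : dag_rec tl hd k (fun e => (d == e)%:R) (fk^~ (inr d)).
Proof.
move=> e; rewrite fkP; congr (_ + _).
by case: ifP => _; rewrite ?add0r // big1 ?add0r // => i _; rewrite mulr0.
Qed.

Lemma error_response_rec (z : E -> F) : dag_rec tl hd k z (error_response fk z).
Proof.
move=> e; rewrite /error_response.
under eq_bigr do rewrite error_kernel_rec mulrDr big_distrr.
rewrite big_split /= exchange_big; congr (_ + _).
  by apply: eq_bigr => d _; rewrite big_distrr; apply: eq_bigr => a _; rewrite mulrCA.
by rewrite (bigD1 e) //= eqxx mulr1 big1 ?addr0 // => a /negbTE ->; rewrite mulr0.
Qed.

End ErrorResponse.

Section ErrorRerouting.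
Variables (V E : finType) (tl hd : E -> V) (s : V) (F : finFieldType) (w : nat).
Hypothesis dagG : acyclic tl hd.
Variables (kS : 'I_w -> E -> F) (k : E -> E -> F) (fk : E -> ('I_w + E)%type -> F).
Hypothesis fkP : is_ext_kernel tl hd s kS k fk.

Lemma error_reroute_through_cut (z : {ffun E -> F}) (xi A : {set E}) (t : V) :
  matches z xi -> is_cut tl hd xi t A ->
  exists2 y : {ffun E -> F}, matches y A &
    forall x e, hd e == t -> received fk x z e = received fk x y e.
Proof.
move=> zxi cutA.
(* g propagates z through the network with the edges of A cut off, and y
   keeps what g carries on A. *)
pose kA d e := if d \in A then 0 else k d e.
have kA_A d e : d \in A -> kA d e = 0 by rewrite /kA => ->.
have [g recg] := dag_rec_exists dagG kA z.
pose y := [ffun e => if e \in A then g e else 0].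
exists y => [e /negbTE eA|x e /eqP hd_e]; first by rewrite ffunE eA.
congr (_ + _); change (error_response fk z e = error_response fk y e).
have split_z : error_response fk z =1
    (fun e => error_response fk y e + (if e \in A then 0 else g e)).
  apply: (dag_rec_unique dagG (error_response_rec fkP z)) => d.
  rewrite (error_response_rec fkP) -addrA.
  have -> : y d + (if d \in A then 0 else g d) = g d.
    by rewrite ffunE; case: ifP; rewrite ?addr0 ?add0r.
  rewrite [g d]recg addrA -big_split /=; congr (_ + _); apply: eq_bigr => d' _.
  by rewrite mulrDr /kA; case: ifP; rewrite ?mul0r ?mulr0 ?addr0.
rewrite split_z; case: ifP => [_|/negbT eA]; first by rewrite addr0.
have [->|ge] := eqVneq (g e) 0; first by rewrite addr0.
have [e1 [rest [p ze1 last_e avoidA]]] := dag_rec_support_path dagG recg kA_A eA ge.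
have e1xi : e1 \in xi by apply: contraR ze1 => /zxi ->.
have [a a_in aA] : exists2 a, a \in e1 :: rest & a \in A.
  by apply: cutA p e1xi _; rewrite last_e.
by move/allP: avoidA => /(_ a a_in); rewrite /= aA.
Qed.

End ErrorRerouting.

Lemma exists_cut_le (V E : finType) (tl hd : E -> V) (xi : {set E}) (u : V) r :
  (mincut tl hd xi u <= r)%N -> exists2 A, is_cut tl hd xi u A & (#|A| <= r)%N.
Proof.
rewrite /mincut; apply: (big_ind (fun n =>
  n <= r -> exists2 A, is_cut tl hd xi u A & #|A| <= r)%N).
- move=> leEr; exists setT; last by rewrite cardsT.
  by move=> e1 rest _ _ _; exists e1; rewrite ?mem_head ?in_setT.
- by move=> m n IHm IHn; rewrite geq_min => /orP[/IHm|/IHn].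
- by move=> A /asboolP cutA leAr; exists A.
Qed.

Lemma matchesS (E : finType) (F : fieldType) (z : {ffun E -> F}) (xi xi' : {set E}) :
  xi \subset xi' -> matches z xi -> matches z xi'.
Proof. by move=> /subsetP sub zxi e /(contra (sub e)); exact: zxi. Qed.

Section MinimumDistance.
Variables (V E : finType) (hd : E -> V) (F : fieldType) (w : nat).
Variables (fk : E -> ('I_w + E)%type -> F) (t : V).

Lemma DeltaM_set0 : DeltaM hd fk t set0 = 0.
Proof. by apply/matrixP => i j; rewrite !mxE in_set0. Qed.

Lemma dmin_gt0 : (0 < dmin hd fk t)%N.
Proof.
rewrite /dmin; apply: (big_ind (fun n => 0 < n)%N) => // [m n|xi].
  by rewrite leq_min => -> ->.
by rewrite card_gt0; apply: contra => /eqP ->; rewrite DeltaM_set0 capmx0.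
Qed.

Lemma dmin_le_card xi :
  (PhiM hd fk t :&: DeltaM hd fk t xi != 0)%MS -> (dmin hd fk t <= #|xi|)%N.
Proof. by move=> meet; rewrite /dmin -minEnat -leEnat bigmin_le_cond. Qed.

Definition received_row (x : {ffun 'I_w -> F}) (z : {ffun E -> F}) : 'rV_#|E| :=
  \row_j (if hd (enum_val j) == t then received fk x z (enum_val j) else 0).

Lemma received_rowE x z xi : matches z xi ->
  received_row x z =
    \row_i x i *m PhiM hd fk t + \row_i z (enum_val i) *m DeltaM hd fk t xi.
Proof.
move=> zxi; apply/rowP => j; rewrite !mxE.
under eq_bigr do rewrite !mxE.
under [X in _ + X]eq_bigr do rewrite !mxE.
case: ifP => hd_j; last by rewrite !big1 ?addr0 // => i _; rewrite ?if_same mulr0.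
rewrite /received; congr (_ + _).
rewrite (big_enum_val (fun d => z d * fk (enum_val j) (inr d))).
by apply: eq_bigr => i _; case: ifP => [//|/negbT/zxi ->]; rewrite !mul0r.
Qed.

Lemma eq_messages_of_received_row x x' z z' (xi : {set E}) :
  \rank (PhiM hd fk t) = w -> (#|xi| < dmin hd fk t)%N ->
  matches z xi -> matches z' xi -> received_row x z = received_row x' z' -> x = x'.
Proof.
move=> rankPhi small_xi zxi z'xi.
rewrite (received_rowE x zxi) (received_rowE x' z'xi).
set rx := \row_i x i; set rx' := \row_i x' i.
set rz := \row_i z _; set rz' := \row_i z' _ => eq_rows.
have diff_in_Delta : (rx - rx') *m PhiM hd fk t = (rz' - rz) *m DeltaM hd fk t xi.
  rewrite !mulmxBl; apply/eqP; rewrite subr_eq addrAC eq_sym subr_eq.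
  by rewrite addrC eq_rows.
have [diff0|diff_neq0] := eqVneq ((rx - rx') *m PhiM hd fk t) 0.
  have row_freePhi : row_free (PhiM hd fk t) by rewrite /row_free rankPhi.
  move/eqP: (row_free_inj row_freePhi (etrans diff0 (esym (mul0mx _ _)))).
  rewrite subr_eq0 => /eqP/rowP eq_x; apply/ffunP => i.
  by move: (eq_x i); rewrite !mxE.
suff : (PhiM hd fk t :&: DeltaM hd fk t xi != 0)%MS.
  by move/dmin_le_card; rewrite leqNgt small_xi.
apply: contra diff_neq0 => /eqP cap0; rewrite -submx0 -cap0 sub_capmx submxMl.
by rewrite diff_in_Delta submxMl.
Qed.
End MinimumDistance.

Theorem corollary12
  (V E : finType) (tl hd : E -> V) (s : V) (T : {set V})
  (Hacyc : acyclic tl hd)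
  (HsT : s \notin T)
  (Hsrc : forall e, hd e != s)
  (Hsink : forall t e, t \in T -> tl e != t)
  (F : finFieldType) (w : nat) (Hw : (1 <= w)%N)
  (kS : 'I_w -> E -> F) (k : E -> E -> F) (fk : E -> ('I_w + E)%type -> F)
  (Hfk : is_ext_kernel tl hd s kS k fk)
  (t : V) (Ht : t \in T)
  (Hdim : \rank (PhiM hd fk t) = w) :
  corrects hd fk t
    (Zset (Eset tl hd t (((dmin hd fk t).-1)./2)%N)).
Proof.
move=> x x' z z' [xi Exi zxi] [xi' Exi' z'xi'] eq_received.
have [A cutA leA] := exists_cut_le Exi.
have [A' cutA' leA'] := exists_cut_le Exi'.
have [y yA eq_zy] := error_reroute_through_cut Hacyc Hfk zxi cutA.
have [y' yA' eq_zy'] := error_reroute_through_cut Hacyc Hfk z'xi' cutA'.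
have small_cut : (#|A :|: A'| < dmin hd fk t)%N.
  have := odd_double_half (dmin hd fk t).-1; have := dmin_gt0 hd fk t.
  have := (leq_card_setU A A').1; rewrite -muln2; lia.
apply: (eq_messages_of_received_row Hdim small_cut).
- exact: matchesS (subsetUl A A') yA.
- exact: matchesS (subsetUr A A') yA'.
apply/rowP => j; rewrite !mxE; case: ifP => // hd_j.
by rewrite -eq_zy // -eq_zy' // eq_received.
Qed.
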